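(* Let $\mathcal{T}$ be a finite or countably infinite set, let $\prec$ be a strict total order on $\mathcal{T}$, and let $\mathbf{p}, \mathbf{q}$ be probability distributions on $\mathcal{T}$. Let $\lhd$ denote the lexicographic order on $\mathcal{T} \times [0,1]$ induced by $(\mathcal{T},\prec)$ and $([0,1],<)$. Suppose that $\Pr[(X,U_1) \lhd (Y,U_0)] \ne 1/2$, where $Y \sim \mathbf{q}$, $X \sim \mathbf{p}$, and $U_0,U_1 \sim^{\mathrm{iid}} \mathrm{Uniform}(0,1)$ are mutually independent. For each positive integer $m$, let $X_0 \sim \mathbf{q}$, $X_1,\dots,X_m \sim^{\mathrm{iid}} \mathbf{p}$, $U_0,\dots,U_m \sim^{\mathrm{iid}} \mathrm{Uniform}(0,1)$ be mutually independent, and let $R = \sum_{j=1}^m \big(\mathbb{I}[X_j \prec X_0] + \mathbb{I}[X_j = X_0, U_j < U_0]\big)$. Then for all $m \ge 1$, $R$ is not uniformly distributed on $\{0,1,\dots,m\}$.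
   Context: The lexicographic order: $(x,u) \lhd (y,v)$ iff $x \prec y$, or $x = y$ and $u < v$. $\mathbb{I}[\cdot]$ denotes the indicator of an event. *)

From HB Require Import structures.
From mathcomp Require Import all_boot all_order all_algebra.
From mathcomp Require Import all_classical all_reals all_analysis.
Set Implicit Arguments. Unset Strict Implicit. Unset Printing Implicit Defensive.
Import Order.TTheory GRing.Theory Num.Theory.
Local Open Scope classical_set_scope.
Local Open Scope ring_scope.

Definition strict_total_order (T : eqType) (lt : rel T) : Prop :=
  (forall x, ~~ lt x x) /\
  (forall x y z, lt x y -> lt y z -> lt x z) /\
  (forall x y, x != y -> lt x y \/ lt y x).

Definition prob_distr (R : realType) (T : countType) (p : T -> R) : Prop :=
  (forall t, 0 <= p t) /\ (\esum_(t in [set: T]) (p t)%:E = 1)%E.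

Definition lexlt (R : realType) (T : eqType) (lt : rel T) (a b : T * R) : bool :=
  lt a.1 b.1 || ((a.1 == b.1) && (a.2 < b.2)).

(* Taking A_j = setT
   or B_j = setT recovers the product rule for every subfamily. *)
Definition mutually_indep (d : measure_display) (Ω : measurableType d)
  (R : realType) (P : probability Ω R) (T : Type) (m : nat)
  (X : nat -> Ω -> T) (U : nat -> Ω -> R) : Prop :=
  forall (A : nat -> set T) (B : nat -> set R),
    (forall j, measurable (B j)) ->
    P (\bigcap_(j in [set j | (j <= m)%N]) (X j @^-1` A j `&` U j @^-1` B j))
    = (\prod_(j < m.+1) (P (X j @^-1` A j) * P (U j @^-1` B j)))%E.

Definition rank_stat (R : realType) (T : eqType) (lt : rel T) (m : nat)
  (Xv : nat -> T) (Uv : nat -> R) : nat :=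
  (\sum_(1 <= j < m.+1)
     (lt (Xv j) (Xv 0%N) + ((Xv j == Xv 0%N) && (Uv j < Uv 0%N)%R)))%N.

From HB Require Import structures.
From mathcomp Require Import all_boot all_order all_algebra.
From mathcomp Require Import all_classical all_reals all_analysis.
From mathcomp Require Import measurable_realfun ring.
Import Order.TTheory GRing.Theory Num.Theory.
Local Open Scope classical_set_scope.
Local Open Scope ring_scope.
Set Implicit Arguments. Unset Strict Implicit. Unset Printing Implicit Defensive.

(* Write L_j for the event (X_j,U_j) <| (X_0,U_0). Since lt is irreflexive,
   the rank is the number of j in 1..m for which L_j occurs, so its mean is
   the sum of the P(L_j). On the fibre {X_j = a, X_0 = b}, the event L_j is a
   condition on the pair (U_j, U_0), and by independence the joint law of the
   fibre and that pair is the same for every j >= 1; summing over the countably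
   many fibres gives P(L_j) = P(L_1). Hence the mean of the rank is m P(L_1),
   whereas a uniform law on {0,...,m} has mean m/2. *)

Lemma eq_measure_bigcup_countable (R : realType) d1 d2
    (T1 : measurableType d1) (T2 : measurableType d2) (I : countType)
    (mu : {measure set T1 -> \bar R}) (nu : {measure set T2 -> \bar R})
    (F : I -> set T1) (G : I -> set T2) :
  (forall i, measurable (F i)) -> (forall i, measurable (G i)) ->
  trivIset setT F -> trivIset setT G ->
  (forall i, mu (F i) = nu (G i)) ->
  mu (\bigcup_i F i) = nu (\bigcup_i G i).
Proof.
pose seq_of T (H : I -> set T) n := if pickle_inv n is Some i then H i else set0.
have bigcup_seq_of T (H : I -> set T) : \bigcup_i H i = \bigcup_n seq_of T H n.
  apply/seteqP; split => x [i _ Hx].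
    by exists (pickle i) => //; rewrite /seq_of pickleK_inv.
  by move: Hx; rewrite /seq_of; case: pickle_inv => // j; exists j.
have triv_seq_of T (H : I -> set T) : trivIset setT H -> trivIset setT (seq_of T H).
  move=> /trivIsetP tH; apply/trivIsetP => n n' _ _ nn'; rewrite /seq_of.
  case En: (pickle_inv n) => [i|]; last by rewrite set0I.
  case En': (pickle_inv n') => [i'|]; last by rewrite setI0.
  apply: tH => //; apply: contra nn' => /eqP ii'.
  by rewrite -(@pickle_invK I n) -(@pickle_invK I n') En En' ii'.
have mseq_of d (T : measurableType d) (H : I -> set T) : (forall i, d.-measurable (H i)) ->
    forall n, measurable (seq_of T H n).
  by move=> mH n; rewrite /seq_of; case: pickle_inv.
move=> mF mG tF tG FG.
rewrite !bigcup_seq_of !measure_bigcup //.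
- apply: eq_eseriesr => n _; rewrite /seq_of.
  by case: pickle_inv => [i|]; rewrite ?FG ?measure0.
- by move=> n _; apply: mseq_of.
- exact: triv_seq_of.
- by move=> n _; apply: mseq_of.
- exact: triv_seq_of.
Qed.

Lemma eq_measure_setX (R : realType) d1 d2
    (T1 : measurableType d1) (T2 : measurableType d2)
    (mu nu : {measure set (T1 * T2) -> \bar R}) :
  (mu setT < +oo)%E ->
  (forall A B, measurable A -> measurable B -> mu (A `*` B) = nu (A `*` B)) ->
  forall S, measurable S -> mu S = nu S.
Proof.
move=> mu_fin mu_nu.
apply: (measure_unique [set A `*` B | A in measurable & B in measurable]
  (fun=> setT)) => //.
- exact: measurable_prod_measurableType.
- move=> _ _ [A1 mA1 [B1 mB1 <-]] [A2 mA2 [B2 mB2 <-]]; rewrite -setXI.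
  by exists (A1 `&` A2); [exact: measurableI | exists (B1 `&` B2) => //; exact: measurableI].
- by move=> _; exists setT => //; exists setT => //; rewrite setXTT.
- by rewrite bigcup_const.
- by move=> _ [A mA [B mB <-]]; exact: mu_nu.
Qed.

Lemma integral_sum_indic (R : realType) d (T : measurableType d)
    (mu : {measure set T -> \bar R}) n (A : 'I_n -> set T) :
  (forall i, measurable (A i)) ->
  (\int[mu]_x (\sum_(i < n) \1_(A i) x)%:E = \sum_(i < n) mu (A i))%E.
Proof.
move=> mA; under eq_integral => x _ do rewrite -sumEFin.
rewrite ge0_integral_sum //.
- by apply: eq_bigr => i _; rewrite integral_indic ?setIT.
- by move=> i; apply/measurable_EFinP; exact: measurable_indic.
Qed.

Lemma integral_natr_bounded (R : realType) d (T : measurableType d)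
    (mu : {measure set T -> \bar R}) (f : T -> nat) n :
  (forall k, measurable (f @^-1` [set k])) -> (forall x, (f x <= n)%N) ->
  (\int[mu]_x ((f x)%:R)%:E
   = \sum_(k < n.+1) (k%:R)%:E * mu (f @^-1` [set (k : nat)]))%E.
Proof.
move=> mf f_le.
have f_indic x : (((f x)%:R)%:E
    = \sum_(k < n.+1) (k%:R)%:E * (\1_(f @^-1` [set (k : nat)]) x)%:E :> \bar R)%E.
  rewrite (bigD1 (inord (f x))) //= big1 ?adde0.
    by rewrite inordK ?ltnS // indicE mem_set //= mule1.
  move=> k fxk; rewrite indicE memNset ?mule0 //= => fx_k.
  by rewrite fx_k inord_val eqxx in fxk.
under eq_integral => x _ do rewrite f_indic.
have mindic k : measurable_fun setT (fun x => (\1_(f @^-1` [set (k : nat)]) x)%:E : \bar R).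
  by apply/measurable_EFinP; exact: measurable_indic.
rewrite ge0_integral_sum //; last by move=> k; exact: measurable_funeM.
apply: eq_bigr => k _.
by rewrite ge0_integralZl // integral_indic ?setIT.
Qed.

Lemma double_sum_ord n : (\sum_(k < n.+1) k).*2 = n * n.+1.
Proof.
rewrite -muln2 -(big_mkord xpredT (fun k => k)) bin2_sum mulnC.
by rewrite -(mul_bin_diag n.+1 1) bin1 mulnC.
Qed.

Lemma uniform_ord_mean (F : numFieldType) n :
  \sum_(k < n.+1) k%:R / n.+1%:R = n%:R / 2 :> F.
Proof.
have n1_neq0 : n.+1%:R != 0 :> F by rewrite pnatr_eq0.
have two_neq0 : 2 != 0 :> F by rewrite pnatr_eq0.
rewrite -mulr_suml -natr_sum.
have /(congr1 (fun k => k%:R : F)) := double_sum_ord n.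
rewrite -muln2 !natrM => /(canRL (mulfK two_neq0)) ->.
by field.
Qed.

Section irreflexive_rank_stat.
Variables (R : realType) (T : eqType) (lt : rel T).
Hypothesis lt_irr : forall x, ~~ lt x x.

Lemma rank_stat_lexlt m (Xv : nat -> T) (Uv : nat -> R) :
  rank_stat lt m Xv Uv
  = (\sum_(1 <= j < m.+1) lexlt lt (Xv j, Uv j) (Xv 0%N, Uv 0%N))%N.
Proof.
apply: eq_bigr => j _; rewrite /lexlt /=.
by case: eqP => [->|_]; rewrite ?(negbTE (lt_irr _)) ?andFb ?addn0 ?orbF.
Qed.

Lemma rank_stat_le m (Xv : nat -> T) (Uv : nat -> R) : (rank_stat lt m Xv Uv <= m)%N.
Proof.
rewrite rank_stat_lexlt (@leq_trans (\sum_(1 <= j < m.+1) 1)) //.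
  by apply: leq_sum => j _; exact: leq_b1.
by rewrite sum_nat_const_nat subn1 muln1.
Qed.

End irreflexive_rank_stat.

Section random_rank.
Variables (R : realType) (d : measure_display) (Ω : measurableType d).
Variables (P : probability Ω R) (T : countType) (lt : rel T) (m : nat).
Variables (X : nat -> Ω -> T) (U : nat -> Ω -> R).
Hypothesis indep : mutually_indep P m X U.

Lemma mutually_indep_pair i j (Ai Aj : set T) (Bi Bj : set R) :
  i != j -> (i <= m)%N -> (j <= m)%N -> measurable Bi -> measurable Bj ->
  P (X i @^-1` Ai `&` U i @^-1` Bi `&` (X j @^-1` Aj `&` U j @^-1` Bj))
  = (P (X i @^-1` Ai) * P (U i @^-1` Bi) * (P (X j @^-1` Aj) * P (U j @^-1` Bj)))%E.
Proof.
move=> ij im jm mBi mBj.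
have ji : (j == i) = false by rewrite eq_sym; exact: negbTE.
pose A k := if k == i then Ai else if k == j then Aj else setT.
pose B k := if k == i then Bi else if k == j then Bj else setT.
have mB k : measurable (B k) by rewrite /B; case: ifP => // _; case: ifP.
have := indep A mB.
have -> : \bigcap_(k in [set k | (k <= m)%N]) (X k @^-1` A k `&` U k @^-1` B k)
    = X i @^-1` Ai `&` U i @^-1` Bi `&` (X j @^-1` Aj `&` U j @^-1` Bj).
  apply/seteqP; split => [w Hw|w [Hi Hj] k _].
    by move: (Hw i im) (Hw j jm); rewrite /A /B eqxx ji eqxx.
  by rewrite /A /B; case: eqP => [->//|_]; case: eqP => [->//|].
move=> ->.
have ord_inj k : (k <= m)%N -> (inord k : 'I_m.+1) = k :> nat by move=> km; rewrite inordK.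
rewrite (bigD1 (inord i)) //= (bigD1 (inord j)) /=; last first.
  by rewrite -val_eqE /= !ord_inj // eq_sym.
rewrite big1 ?mule1 => [|k /andP[ki kj]].
  by rewrite /A /B !ord_inj // eqxx ji eqxx.
have [k_i k_j] : val k != i /\ val k != j.
  by split; [apply: contra ki | apply: contra kj] => /eqP <-; rewrite -val_eqE /= inordK.
by rewrite /A /B (negbTE k_i) (negbTE k_j) !preimage_setT probability_setT mule1.
Qed.

Hypothesis mX : forall j t, (j <= m)%N -> measurable (X j @^-1` [set t]).
Hypothesis mU : forall j, (j <= m)%N -> measurable_fun setT (U j).
Hypothesis X_ident : forall j t, (1 <= j <= m)%N ->
  P (X j @^-1` [set t]) = P (X 1%N @^-1` [set t]).
Hypothesis U_ident : forall j B, (1 <= j <= m)%N -> measurable B ->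
  P (U j @^-1` B) = P (U 1%N @^-1` B).

Definition fiber_pair j (ab : T * T) : set Ω :=
  X j @^-1` [set ab.1] `&` X 0%N @^-1` [set ab.2].

Definition U_pair j w : R * R := (U j w, U 0%N w).

Lemma measurable_fiber_pair j ab : (j <= m)%N -> measurable (fiber_pair j ab).
Proof. by move=> jm; apply: measurableI; exact: mX. Qed.

Lemma measurable_U_pair j : (j <= m)%N -> measurable_fun setT (U_pair j).
Proof. by move=> jm; apply: measurable_fun_pair; exact: mU. Qed.

Lemma prob_fiber_pair_rect j ab A B : (1 <= j <= m)%N ->
  measurable A -> measurable B ->
  P (fiber_pair j ab `&` U_pair j @^-1` (A `*` B))
  = (P (X 1%N @^-1` [set ab.1]) * P (U 1%N @^-1` A)
     * (P (X 0%N @^-1` [set ab.2]) * P (U 0%N @^-1` B)))%E.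
Proof.
move=> /[dup] j_range /andP[j_gt0 jm] mA mB.
rewrite -(X_ident _ j_range) -(U_ident j_range mA).
rewrite -mutually_indep_pair ?(lt0n_neq0 j_gt0) //.
by apply: congr1; apply/seteqP; split => w; rewrite /fiber_pair /U_pair /=; tauto.
Qed.

Lemma prob_fiber_pair_ident j ab S : (1 <= j <= m)%N -> measurable S ->
  P (fiber_pair j ab `&` U_pair j @^-1` S) = P (fiber_pair 1%N ab `&` U_pair 1%N @^-1` S).
Proof.
move=> j_range; have one_range : (1 <= 1 <= m)%N.
  by case/andP: j_range => j_gt0 jm; rewrite leqnn (leq_trans j_gt0 jm).
(* [mj] and [m1] are what make the pushforwards below measures. *)
have [mj m1] := (measurable_U_pair (proj2 (andP j_range)),
                 measurable_U_pair (proj2 (andP one_range))).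
pose mu k (mk : measurable (fiber_pair k ab)) := pushforward (mrestr P mk) (U_pair k).
have muE k mk S' : mu k mk S' = P (fiber_pair k ab `&` U_pair k @^-1` S').
  by rewrite /mu /pushforward /mrestr setIC.
have [mfj mf1] := (measurable_fiber_pair ab (proj2 (andP j_range)),
                   measurable_fiber_pair ab (proj2 (andP one_range))).
rewrite -(muE j mfj) -(muE 1%N mf1).
apply: eq_measure_setX => //.
- rewrite /= /pushforward /mrestr preimage_setT setTI.
  exact: (le_lt_trans (probability_le1 P mfj)) (ltry 1).
- move=> A B mA mB; rewrite /= -/(mu _ mfj (A `*` B)) -/(mu _ mf1 (A `*` B)).
  by rewrite !muE !prob_fiber_pair_rect.
Qed.

Definition lex_event j := [set w | lexlt lt (X j w, U j w) (X 0%N w, U 0%N w)].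

Definition lex_region (a b : T) : set (R * R) := [set z | lexlt lt (a, z.1) (b, z.2)].

Definition lex_piece j (ab : T * T) : set Ω :=
  fiber_pair j ab `&` U_pair j @^-1` lex_region ab.1 ab.2.

Lemma lex_event_bigcup j : lex_event j = \bigcup_ab lex_piece j ab.
Proof.
apply/seteqP; split => [w Lw|w [[a b] _ [[/= Ha Hb] Lw]]].
  by exists (X j w, X 0%N w).
by rewrite /lex_event /= Ha Hb.
Qed.

Lemma trivIset_lex_piece j : trivIset setT (lex_piece j).
Proof.
apply/trivIsetP => -[a b] [a' b'] _ _; apply: contraNeq => /set0P[w].
by case=> -[[/= <- <-] _] [[/= <- <-] _].
Qed.

Lemma measurable_lex_region a b : measurable (lex_region a b).
Proof.
have mlt : measurable [set z : R * R | z.1 < z.2].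
  rewrite [X in measurable X](_ : _ = setT `&` (fun z : R * R => z.1 < z.2) @^-1` [set true]).
    exact: measurable_fun_ltr measurable_fst measurable_snd _ _ _.
  by apply/seteqP; split => z /=; [move=> ->|case=> _ ->].
rewrite /lex_region /lexlt /=; case: (lt a b) => /=.
  by rewrite (_ : [set _ | true] = setT) //; apply/seteqP.
case: (a == b) => //=.
by rewrite (_ : [set _ | false] = set0) //; apply/seteqP; split => z.
Qed.

Lemma measurable_lex_piece j ab : (j <= m)%N -> measurable (lex_piece j ab).
Proof.
move=> jm; apply: measurableI; first exact: measurable_fiber_pair.
rewrite -[X in measurable X]setTI.
exact: measurable_U_pair (measurable_lex_region _ _).
Qed.

Lemma measurable_lex_event j : (j <= m)%N -> measurable (lex_event j).
Proof.
move=> jm; rewrite lex_event_bigcup.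
apply: countable_bigcupT_measurable => [|ab]; first exact: countableP.
exact: measurable_lex_piece.
Qed.

Lemma prob_lex_event j : (1 <= j <= m)%N -> P (lex_event j) = P (lex_event 1%N).
Proof.
move=> j_range; have one_range : (1 <= 1 <= m)%N.
  by case/andP: j_range => j_gt0 jm; rewrite leqnn (leq_trans j_gt0 jm).
rewrite !lex_event_bigcup; apply: eq_measure_bigcup_countable.
- by move=> ab; apply: measurable_lex_piece; case/andP: j_range.
- by move=> ab; apply: measurable_lex_piece; case/andP: one_range.
- exact: trivIset_lex_piece.
- exact: trivIset_lex_piece.
- by move=> ab; apply: prob_fiber_pair_ident => //; exact: measurable_lex_region.
Qed.

Hypothesis lt_irr : forall x, ~~ lt x x.

Definition rank w := rank_stat lt m (fun j => X j w) (fun j => U j w).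

Lemma rank_indicE w : (rank w)%:R = \sum_(i < m) \1_(lex_event i.+1) w :> R.
Proof.
rewrite /rank rank_stat_lexlt // big_add1 big_mkord natr_sum.
apply: eq_bigr => i _; rewrite indicE.
suff -> : (w \in lex_event i.+1) = lexlt lt (X i.+1 w, U i.+1 w) (X 0%N w, U 0%N w) by [].
by apply/idP/idP => [/set_mem | /mem_set].
Qed.

Lemma measurable_rank_fiber k : measurable (rank @^-1` [set k]).
Proof.
have mrank : measurable_fun setT (fun w => (rank w)%:R : R).
  rewrite (funext rank_indicE); apply: measurable_sum => i.
  by apply: measurable_indic; apply: measurable_lex_event.
rewrite (_ : _ @^-1` _ = setT `&` (fun w => (rank w)%:R : R) @^-1` [set k%:R]).
  exact: mrank (measurable_set1 _).
by apply/seteqP; split => w /=; [move=> -> | case=> _ /eqP; rewrite eqr_nat => /eqP].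
Qed.

Lemma integral_rank : (\int[P]_w ((rank w)%:R)%:E = m%:R%:E * P (lex_event 1%N))%E.
Proof.
under eq_integral => w _ do rewrite rank_indicE.
rewrite integral_sum_indic; last by move=> i; exact: measurable_lex_event.
rewrite (eq_bigr (fun=> P (lex_event 1%N))); last first.
  by move=> i _; apply: prob_lex_event; rewrite /= ltn_ord.
by rewrite sumr_const card_ord mule_natl.
Qed.

Lemma uniform_rank_prob_lex_event : (1 <= m)%N ->
  (forall k, (k <= m)%N -> P (rank @^-1` [set k]) = (1 / m.+1%:R)%:E) ->
  P (lex_event 1%N) = (1 / 2)%:E.
Proof.
move=> m_gt0 rank_unif.
(* The same hypothesis, stated through the coercion that integrals produce. *)
have rank_unif' k : (k <= m)%N ->
  (P : {measure set Ω -> \bar R}) (rank @^-1` [set k]) = (1 / m.+1%:R)%:E := rank_unif k.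
have := integral_rank.
rewrite (integral_natr_bounded _ measurable_rank_fiber (fun w => rank_stat_le lt_irr _ _ _)).
under eq_bigr => k _ do rewrite (rank_unif' _ (ltn_ord k)) -EFinM mul1r.
rewrite sumEFin uniform_ord_mean.
have L1_fin : P (lex_event 1%N) \is a fin_num.
  by apply: fin_num_measure; apply: measurable_lex_event.
rewrite -(fineK L1_fin) -EFinM => -[half_eq]; congr (_%:E).
have m_neq0 : m%:R != 0 :> R by rewrite pnatr_eq0 -lt0n.
by apply: (mulfI m_neq0); rewrite -half_eq mul1r.
Qed.
End random_rank.

Theorem corollary3p5 (R : realType) (T : countType) (lt : rel T)
  (p q : T -> R) (m : nat)
  (d : measure_display) (Ω : measurableType d) (P : probability Ω R)
  (X : nat -> Ω -> T) (U : nat -> Ω -> R) :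
  strict_total_order lt ->
  prob_distr p -> prob_distr q ->
  (1 <= m)%N ->
  (* measurability of the random variables *)
  (forall j t, (j <= m)%N -> measurable (X j @^-1` [set t])) ->
  (forall j, (j <= m)%N -> measurable_fun setT (U j)) ->
  (* laws: X_0 ~ q, X_1..X_m ~ p, U_0..U_m ~ Uniform(0,1) *)
  (forall t, P (X 0%N @^-1` [set t]) = (q t)%:E) ->
  (forall j t, (1 <= j <= m)%N -> P (X j @^-1` [set t]) = (p t)%:E) ->
  (forall j (B : set R), (j <= m)%N -> measurable B ->
     P (U j @^-1` B) = lebesgue_measure (B `&` `[0, 1]%classic)) ->
  (* mutual independence *)
  mutually_indep P m X U ->
  (* hypothesis: Pr[(X_1,U_1) <| (X_0,U_0)] <> 1/2 *)
  P [set w | lexlt lt (X 1%N w, U 1%N w) (X 0%N w, U 0%N w)] <> (1 / 2)%:E ->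
  (* conclusion: R is not uniform on {0,...,m} *)
  ~ (forall k : nat, (k <= m)%N ->
       P [set w | rank_stat lt m (fun j => X j w) (fun j => U j w) = k]
       = (1 / m.+1%:R)%:E).
Proof.
move=> [lt_irr _] _ _ m_gt0 mX mU _ law_X law_U indep lex_ne_half rank_unif.
have X_ident j t : (1 <= j <= m)%N -> P (X j @^-1` [set t]) = P (X 1%N @^-1` [set t]).
  by move=> j_range; rewrite !law_X.
have U_ident j B : (1 <= j <= m)%N -> measurable B -> P (U j @^-1` B) = P (U 1%N @^-1` B).
  by case/andP=> _ jm mB; rewrite !law_U.
apply: lex_ne_half.
exact: (uniform_rank_prob_lex_event indep mX mU X_ident U_ident lt_irr m_gt0 rank_unif).
Qed.
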